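(* Let $A$ be a positive operator on a real or complex Hilbert space which has a projection decomposition. Then either $A$ is a self-adjoint projection or $\|A\|>1$.
   Context: A positive operator $A$ has a projection decomposition if $A$ can be written as the sum of a finite or infinite sequence of (not necessarily mutually orthogonal) self-adjoint projections, with the series converging in the strong operator topology. *)

From HB Require Import structures.
From mathcomp Require Import all_boot all_order all_algebra.
From mathcomp Require Import boolp classical_sets reals.
From mathcomp Require Import complex.
Set Implicit Arguments. Unset Strict Implicit. Unset Printing Implicit Defensive.
Import Order.TTheory GRing.Theory Num.Theory.
Local Open Scope ring_scope.
Local Open Scope classical_set_scope.

(* Generic Hilbert-space notions over a scalar field K (which will be R or R[i])
   with conjugation [cj] and real part [re : K -> R]. *)
Section Hilbert.
Variables (R : realType) (K : numFieldType) (cj : K -> K) (re : K -> R).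
Variable (V : lmodType K).
Variable (ip : V -> V -> K).  (* inner product, linear in the first argument *)

Definition hnorm (x : V) : R := Num.sqrt (re (ip x x)).

Definition hcauchy (u : nat -> V) : Prop :=
  forall e : R, 0 < e -> exists N : nat, forall m n : nat,
    (N <= m)%N -> (N <= n)%N -> hnorm (u m - u n) < e.

Definition hconverges (u : nat -> V) (l : V) : Prop :=
  forall e : R, 0 < e -> exists N : nat, forall n : nat,
    (N <= n)%N -> hnorm (u n - l) < e.

Definition is_hilbert : Prop :=
  [/\ (forall (a : K) (x y z : V), ip (a *: x + y) z = a * ip x z + ip y z),
      (forall x y : V, ip y x = cj (ip x y)),
      (forall x : V, 0 <= ip x x),
      (forall x : V, ip x x = 0 -> x = 0)
    & (forall u : nat -> V, hcauchy u -> exists l : V, hconverges u l)].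

Definition bounded_op (A : V -> V) : Prop :=
  (forall (a : K) (x y : V), A (a *: x + y) = a *: A x + A y) /\
  (exists M : R, forall x : V, hnorm (A x) <= M * hnorm x).

Definition self_adjoint (A : V -> V) : Prop :=
  bounded_op A /\ forall x y : V, ip (A x) y = ip x (A y).

Definition positive_op (A : V -> V) : Prop :=
  self_adjoint A /\ forall x : V, 0 <= ip (A x) x.

Definition sa_projection (P : V -> V) : Prop :=
  self_adjoint P /\ forall x : V, P (P x) = P x.

Definition has_projection_decomposition (A : V -> V) : Prop :=
  (exists (n : nat) (P : nat -> V -> V),
      (forall i : nat, (i < n)%N -> sa_projection (P i)) /\
      (forall x : V, A x = \sum_(i < n) P i x)) \/
  (exists P : nat -> V -> V,
      (forall i : nat, sa_projection (P i)) /\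
      (forall x : V, hconverges (fun n => \sum_(i < n) P i x) (A x))).

Definition opnorm (A : V -> V) : R :=
  sup [set hnorm (A x) | x in [set x : V | hnorm x <= 1]].

End Hilbert.

Definition lemma9_for (R : realType) (K : numFieldType) (cj : K -> K) (re : K -> R) : Prop :=
  forall (V : lmodType K) (ip : V -> V -> K) (A : V -> V),
    is_hilbert cj re ip ->
    positive_op re ip A ->
    has_projection_decomposition re ip A ->
    sa_projection re ip A \/ 1 < opnorm re ip A.

From HB Require Import structures.
From mathcomp Require Import all_boot all_order all_algebra.
From mathcomp Require Import boolp classical_sets reals.
From mathcomp Require Import complex.
From mathcomp Require Import ring lra.

(* Suppose ||A|| <= 1 and A x = sum_i P_i x strongly, with self-adjoint
   projections P_i.  For y in the range of some P_j,
     Re <A y, y> = sum_i ||P_i y||^2 >= ||P_j y||^2 = ||y||^2,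
   so ||A y - y||^2 = ||A y||^2 - 2 Re <A y, y> + ||y||^2 <= 0 and A y = y.
   Hence A P_j = P_j for every j, and applying A to the series gives
   A (A x) = sum_i A P_i x = sum_i P_i x = A x: A is a projection. *)

Set Implicit Arguments. Unset Strict Implicit. Unset Printing Implicit Defensive.

Section InnerProductSpace.
(* imported locally: [Num.Theory.Re] would shadow [complex.Re] in [lemma9] *)
Import Order.TTheory GRing.Theory Num.Theory.
Local Open Scope ring_scope.

Variables (R : realType) (K : numFieldType).
Variables (cj : {rmorphism K -> K}) (re : {additive K -> R}) (ofR : R -> K).
Hypothesis cj_ofR : forall r, cj (ofR r) = ofR r.
Hypothesis re_cj : forall z, re (cj z) = re z.
Hypothesis re_ofRM : forall r z, re (ofR r * z) = r * re z.
Hypothesis re_ge0 : forall z, 0 <= z -> 0 <= re z.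
Hypothesis re_eq0 : forall z, 0 <= z -> re z = 0 -> z = 0.

Variables (V : lmodType K) (ip : V -> V -> K).
Hypothesis ip_linear : forall a x y z, ip (a *: x + y) z = a * ip x z + ip y z.
Hypothesis ip_conj : forall x y, ip y x = cj (ip x y).
Hypothesis ip_ge0 : forall x, 0 <= ip x x.
Hypothesis ip_eq0 : forall x, ip x x = 0 -> x = 0.

Local Notation hn := (hnorm re ip).
Local Notation hconv := (hconverges re ip).

Lemma ip0l z : ip 0 z = 0.
Proof.
have := ip_linear 1 0 0 z; rewrite scaler0 addr0 mul1r => /eqP.
by rewrite -subr_eq subrr eq_sym => /eqP.
Qed.

Lemma ipDl z : {morph ip^~ z : x y / x + y}.
Proof. by move=> x y; have := ip_linear 1 x y z; rewrite scale1r mul1r. Qed.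

Lemma ipZl a x z : ip (a *: x) z = a * ip x z.
Proof. by rewrite -[a *: x]addr0 ip_linear ip0l addr0. Qed.

Lemma ipBl x y z : ip (x - y) z = ip x z - ip y z.
Proof. by rewrite ipDl -scaleN1r ipZl mulN1r. Qed.

Lemma ipBr x y z : ip z (x - y) = ip z x - ip z y.
Proof. by rewrite ip_conj ipBl rmorphB -!ip_conj. Qed.

Lemma ipDr z : {morph ip z : x y / x + y}.
Proof. by move=> x y; rewrite ip_conj ipDl rmorphD -!ip_conj. Qed.

Lemma ip0r z : ip z 0 = 0.
Proof. by rewrite ip_conj ip0l rmorph0. Qed.

Lemma ipZr_ofR r x z : ip z (ofR r *: x) = ofR r * ip z x.
Proof. by rewrite ip_conj ipZl rmorphM cj_ofR -ip_conj. Qed.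

Lemma re_ipC x y : re (ip x y) = re (ip y x).
Proof. by rewrite ip_conj re_cj. Qed.

Definition sqn x := re (ip x x).

Lemma sqn_ge0 x : 0 <= sqn x. Proof. exact: re_ge0. Qed.

Lemma sqn_eq0 x : sqn x = 0 -> x = 0.
Proof. by move=> /re_eq0 x0; apply/ip_eq0/x0. Qed.

Lemma sqn0 : sqn 0 = 0. Proof. by rewrite /sqn ip0l raddf0. Qed.

Lemma sqnB x y : sqn (x - y) = sqn x - (re (ip x y)) *+ 2 + sqn y.
Proof.
by rewrite /sqn ipBl !ipBr !raddfB (re_ipC y x) /= mulr2n; lra.
Qed.

Lemma sqnD x y : sqn (x + y) = sqn x + (re (ip x y)) *+ 2 + sqn y.
Proof.
by rewrite /sqn ipDl !ipDr !raddfD (re_ipC y x) /= mulr2n; lra.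
Qed.

Lemma sqnZ_ofR r x : sqn (ofR r *: x) = r ^+ 2 * sqn x.
Proof. by rewrite /sqn ipZl ipZr_ofR !re_ofRM mulrA expr2. Qed.

Lemma cauchy_schwarz x y : re (ip x y) ^+ 2 <= sqn x * sqn y.
Proof.
have [y0|] := eqVneq (sqn y) 0.
  by rewrite (sqn_eq0 y0) ip0r raddf0 expr0n /= sqn0 mulr0.
rewrite neq_lt ltNge sqn_ge0 /= => y_gt0.
set r := re (ip x y); set t := r / sqn y.
(* expand 0 <= ||x - t y||^2 with the optimal real t = Re <x, y> / ||y||^2 *)
have := sqn_ge0 (x - ofR t *: y).
rewrite sqnB ipZr_ofR re_ofRM sqnZ_ofR.
have -> : t ^+ 2 * sqn y = r ^+ 2 / sqn y.
  by rewrite /t expr2 expr2; field; rewrite gt_eqF.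
have -> : (t * r) *+ 2 = (r ^+ 2 / sqn y) *+ 2 by rewrite /t expr2 mulrAC.
rewrite mulr2n => expansion_ge0.
by rewrite -ler_pdivrMr //; lra.
Qed.

Lemma hn_ge0 x : 0 <= hn x. Proof. exact: sqrtr_ge0. Qed.

Lemma hn_sqr x : hn x ^+ 2 = sqn x. Proof. by rewrite sqr_sqrtr // sqn_ge0. Qed.

Lemma hn_eq0 x : hn x = 0 -> x = 0.
Proof. by move=> x0; apply: sqn_eq0; rewrite -hn_sqr x0 expr0n. Qed.

Lemma hn0 : hn 0 = 0. Proof. by rewrite /hnorm -/(sqn 0) sqn0 sqrtr0. Qed.

Lemma hnN x : hn (- x) = hn x.
Proof. by rewrite /hnorm -/(sqn _) -sub0r sqnB sqn0 ip0l raddf0 mul0rn !sub0r oppr0 add0r. Qed.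

Lemma hnZ_ofR r x : hn (ofR r *: x) = `|r| * hn x.
Proof. by rewrite /hnorm -/(sqn _) sqnZ_ofR sqrtrM ?sqrtr_sqr // sqr_ge0. Qed.

Lemma norm_re_ip_le x y : `|re (ip x y)| <= hn x * hn y.
Proof.
rewrite -sqrtr_sqr /hnorm -sqrtrM ?sqn_ge0 // ler_sqrt ?mulr_ge0 ?sqn_ge0 //.
exact: cauchy_schwarz.
Qed.

Lemma ler_hnD x y : hn (x + y) <= hn x + hn y.
Proof.
rewrite -(ler_pXn2r (n := 2)) ?nnegrE ?addr_ge0 ?hn_ge0 //.
rewrite sqrrD !hn_sqr sqnD mulr2n mulr2n.
have := norm_re_ip_le x y; have := ler_norm (re (ip x y)); lra.
Qed.

Lemma hconverges_uniq u l1 l2 : hconv u l1 -> hconv u l2 -> l1 = l2.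
Proof.
move=> u_l1 u_l2; apply/eqP; rewrite -subr_eq0; apply/eqP/hn_eq0.
apply/eqP; rewrite eq_le hn_ge0 andbT leNgt; apply/negP => d_gt0.
have e_gt0 : 0 < hn (l1 - l2) / 2 by rewrite divr_gt0.
have [n1 near1] := u_l1 _ e_gt0; have [n2 near2] := u_l2 _ e_gt0.
have := near1 (maxn n1 n2) (leq_maxl _ _).
have := near2 (maxn n1 n2) (leq_maxr _ _).
set w := u (maxn n1 n2).
have : hn (l1 - l2) <= hn (w - l2) + hn (- (w - l1)).
  have -> : l1 - l2 = (w - l2) + - (w - l1).
    by rewrite opprB [RHS]addrC addrA subrK.
  exact: ler_hnD.
rewrite hnN; lra.
Qed.

Lemma hconverges_re_ip_ge u l z c m : hconv u l ->
  (forall n, (m <= n)%N -> c <= re (ip (u n) z)) -> c <= re (ip l z).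
Proof.
move=> u_l u_ge; rewrite leNgt; apply/negP => lt_c.
set d := c - re (ip l z).
have d_gt0 : 0 < d by rewrite subr_gt0.
have z1_gt0 : 0 < hn z + 1 by rewrite ltr_wpDl ?hn_ge0.
have [n0 near] := u_l (d / (hn z + 1)) (divr_gt0 d_gt0 z1_gt0).
have := near (maxn n0 m) (leq_maxl _ _).
have := u_ge (maxn n0 m) (leq_maxr _ _).
set w := u (maxn n0 m) => ge_c near_w.
have split_w : re (ip w z) = re (ip l z) + re (ip (w - l) z).
  by rewrite ipBl raddfB addrC subrK.
have := norm_re_ip_le (w - l) z; have := ler_norm (re (ip (w - l) z)).
have : hn (w - l) * hn z <= d / (hn z + 1) * hn z.
  by rewrite ler_wpM2r ?hn_ge0 ?ltW.
have : d / (hn z + 1) * hn z < d.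
  by rewrite mulrAC ltr_pdivrMr // ltr_pM2l // ltrDl.
rewrite /d in ge_c *; lra.
Qed.

Section BoundedOperator.
Variable A : V -> V.
Hypothesis A_bounded : bounded_op re ip A.

Let A_linear : forall a x y, A (a *: x + y) = a *: A x + A y.
Proof. by case: A_bounded. Qed.

Lemma lin0 : A 0 = 0.
Proof.
have := A_linear 1 0 0; rewrite scaler0 addr0 scale1r => /eqP.
by rewrite -subr_eq subrr eq_sym => /eqP.
Qed.

Lemma linD : {morph A : x y / x + y}.
Proof. by move=> x y; have := A_linear 1 x y; rewrite !scale1r. Qed.

Lemma linZ a x : A (a *: x) = a *: A x.
Proof. by have := A_linear a x 0; rewrite !addr0 lin0 addr0. Qed.

Lemma linB x y : A (x - y) = A x - A y.
Proof. by rewrite linD -scaleN1r linZ scaleN1r. Qed.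

Lemma hconverges_op u l : hconv u l -> hconv (fun n => A (u n)) (A l).
Proof.
case: A_bounded => _ [M A_le] u_l e e_gt0.
have M1_gt0 : 0 < `|M| + 1 by rewrite ltr_wpDl.
have [n0 near] := u_l (e / (`|M| + 1)) (divr_gt0 e_gt0 M1_gt0).
exists n0 => n le_n0n; rewrite -linB.
apply: le_lt_trans (A_le _) _.
apply: (@le_lt_trans _ _ ((`|M| + 1) * hn (u n - l))).
  by rewrite ler_wpM2r ?hn_ge0 // (le_trans (ler_norm M)) // lerDl.
by rewrite mulrC -ltr_pdivlMr // near.
Qed.

Lemma opnorm_ub x : hn x <= 1 -> hn (A x) <= opnorm re ip A.
Proof.
move=> x_le1; apply: sup_upper_bound; last by exists x.
split; first by exists (hn (A 0)), 0; rewrite //= hn0 ler01.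
case: A_bounded => _ [M A_le]; exists `|M| => _ [y /= y_le1 <-].
apply: le_trans (A_le y) _.
apply: (@le_trans _ _ (`|M| * hn y)); first by rewrite ler_wpM2r ?hn_ge0 ?ler_norm.
by rewrite ler_piMr.
Qed.

Lemma opnorm_le1_contraction x : opnorm re ip A <= 1 -> hn (A x) <= hn x.
Proof.
move=> A_le1; have [x0|] := eqVneq (hn x) 0; first by rewrite (hn_eq0 x0) lin0 hn0.
rewrite neq_lt ltNge hn_ge0 /= => x_gt0.
have := le_trans (opnorm_ub (x := ofR (hn x)^-1 *: x) _) A_le1.
rewrite linZ !hnZ_ofR ger0_norm ?invr_ge0 ?hn_ge0 // mulVf ?gt_eqF // lexx.
by rewrite mulrC ler_pdivrMr // mul1r; apply.
Qed.

Lemma contraction_fixed x :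
  hn (A x) <= hn x -> sqn x <= re (ip (A x) x) -> A x = x.
Proof.
rewrite -(ler_pXn2r (n := 2)) ?nnegrE ?hn_ge0 // !hn_sqr => Ax_le x_le.
apply/eqP; rewrite -subr_eq0; apply/eqP/sqn_eq0.
by apply/eqP; rewrite eq_le sqn_ge0 andbT sqnB mulr2n; lra.
Qed.

End BoundedOperator.

Lemma sa_projection0 : sa_projection re ip (fun _ => 0).
Proof.
split=> //; split=> [|x y]; last by rewrite ip0l ip0r.
split=> [a x y|]; first by rewrite scaler0 addr0.
by exists 0 => x; rewrite hn0 mul0r.
Qed.

Lemma re_ip_projection P x : sa_projection re ip P -> re (ip (P x) x) = sqn (P x).
Proof. by case=> [[_ P_sa] P_idem]; rewrite -{1}P_idem P_sa. Qed.

(* A finite decomposition becomes a series by padding with zero projections. *)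
Lemma projection_series A : has_projection_decomposition re ip A ->
  exists P : nat -> V -> V, (forall i, sa_projection re ip (P i)) /\
    forall x, hconv (fun n => \sum_(i < n) P i x) (A x).
Proof.
case=> [[n [P [P_proj A_sum]]] | //].
exists (fun i => if (i < n)%N then P i else fun _ => 0); split.
  by move=> i; case: ifP => [/P_proj|_] //; apply: sa_projection0.
move=> x e e_gt0; exists n => m le_nm.
rewrite A_sum (big_ord_widen _ (fun i => P i x) le_nm) [in X in _ - X]big_mkcond /=.
rewrite (eq_bigr (fun i : 'I_m => if (i < n)%N then P i x else 0)).
  by rewrite subrr hn0.
by move=> i _; case: ifP.
Qed.

Lemma sqn_le_re_ip_projection_sum P n j y :
  (forall i, sa_projection re ip (P i)) -> (j < n)%N -> P j y = y ->
  sqn y <= re (ip (\sum_(i < n) P i y) y).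
Proof.
move=> P_proj lt_jn Pjy.
rewrite (big_morph _ (ipDl y) (ip0l y)) (big_morph _ (raddfD re) (raddf0 re)).
rewrite (bigD1 (Ordinal lt_jn)) //= re_ip_projection // Pjy lerDl.
by apply: sumr_ge0 => i _; rewrite re_ip_projection ?sqn_ge0.
Qed.

Theorem projection_decomposition_dichotomy A :
  self_adjoint re ip A -> has_projection_decomposition re ip A ->
  sa_projection re ip A \/ 1 < opnorm re ip A.
Proof.
move=> A_sa /projection_series [P [P_proj A_series]].
have A_bounded : bounded_op re ip A by case: A_sa.
case: (ltP 1 (opnorm re ip A)) => [|A_le1]; [by right | left; split=> // x].
have A_fixes_P j v : A (P j v) = P j v.
  apply: contraction_fixed (opnorm_le1_contraction _ _ A_le1) _ => //.
  have Py : P j (P j v) = P j v by case: (P_proj j).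
  apply: (hconverges_re_ip_ge (m := j.+1) (A_series _)) => n lt_jn.
  exact: (sqn_le_re_ip_projection_sum P_proj lt_jn Py).
apply: hconverges_uniq (hconverges_op A_bounded (A_series x)) _.
suff -> : (fun n => A (\sum_(i < n) P i x)) = (fun n => \sum_(i < n) P i x).
  exact: A_series.
apply: funext => n; rewrite (big_morph _ (linD A_bounded) (lin0 A_bounded)).
by apply: eq_bigr => i _; rewrite A_fixes_P.
Qed.

End InnerProductSpace.

Theorem lemma9 (R : realType) :
  lemma9_for (K := R) (fun z : R => z) (fun z : R => z) /\
  lemma9_for (K := R[i]) (@conjc R) (@Re R).
Proof.
split=> V ip A [ip_lin ip_conj ip_ge0 ip_eq0 _] [A_sa _].
- exact: (projection_decomposition_dichotomy (cj := idfun) (re := idfun)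
    (ofR := idfun) _ _ _ _ _ ip_lin ip_conj ip_ge0 ip_eq0 A_sa).
- apply: (projection_decomposition_dichotomy (cj := conjc) (re := @Re R)
    (ofR := fun r => r%:C%C) (@conjc_real R) _ _ _ _ ip_lin ip_conj ip_ge0 ip_eq0 A_sa).
  + by case.
  + by move=> r [a b] /=; rewrite GRing.mul0r GRing.subr0.
  + by move=> z; rewrite lecE => /andP[].
  + by move=> [a b]; rewrite lecE /= => /andP[/eqP -> _] ->.
Qed.
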